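(* Let $G=(V,E)$ be a finite, connected, simple, undirected graph with no isolated vertices, let $\alpha\in(0,1)$, and let $S\subset V$ be nonempty with $\mathrm{vol}(S)\le\mathrm{vol}(V)/2$. Then $$h_{S,\alpha}\ \le\ \frac{1-\alpha}{\alpha}\,\frac{d_{\mathrm{avg}}(S)}{d_{\min}(S)}\,h_S.$$
   Context: $A$ is the adjacency matrix and $D$ the diagonal degree matrix. The personalized PageRank diffusion matrix is $R_\alpha=\sum_{k=0}^\infty\alpha(1-\alpha)^k(D^{-1}A)^k$. $\mathrm{vol}(S)=\sum_{v\in S}d_v$; $\partial S$ is the set of edges with exactly one endpoint in $S$; $h_S=|\partial S|/\mathrm{vol}(S)$; $h_{S,\alpha}=\frac{1}{|S|}\sum_{i\in S,\ j\in V\setminus S}(R_\alpha)_{ij}$; $d_{\mathrm{avg}}(S)=\mathrm{vol}(S)/|S|$ and $d_{\min}(S)=\min_{v\in S}d_v$. *)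

From HB Require Import structures.
From mathcomp Require Import all_boot all_order all_algebra.
From mathcomp Require Import all_classical all_reals.
From mathcomp Require Import topology normedtype sequences.
Set Implicit Arguments. Unset Strict Implicit. Unset Printing Implicit Defensive.
Import Order.TTheory GRing.Theory Num.Theory numFieldNormedType.Exports.
Local Open Scope ring_scope.

Section Graph.
Variable n : nat.
Variable e : rel 'I_n.+1.

Definition simple_graph : Prop := symmetric e /\ irreflexive e.
Definition connected_graph : Prop := forall x y : 'I_n.+1, connect e x y.
Definition deg (v : 'I_n.+1) : nat := #|[set u | e v u]|.
Definition no_isolated : Prop := forall v, (0 < deg v)%N.

Definition vol (S : {set 'I_n.+1}) : nat := \sum_(v in S) deg v.
(* |∂S| : edges with exactly one endpoint in S (each counted once, oriented out of S) *)
Definition boundary_size (S : {set 'I_n.+1}) : nat :=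
  #|[set p : 'I_n.+1 * 'I_n.+1 | [&& e p.1 p.2, p.1 \in S & p.2 \notin S]]|.
Definition dmin (S : {set 'I_n.+1}) : nat := \big[minn/n.+1]_(v in S) deg v.

Variable R : realType.
Definition adj : 'M[R]_n.+1 := \matrix_(i, j) (e i j)%:R.
Definition degmx : 'M[R]_n.+1 := diag_mx (\row_i (deg i)%:R).
Definition walkmx : 'M[R]_n.+1 := invmx degmx *m adj.
Definition ppr (alpha : R) (i j : 'I_n.+1) : R :=
  limn (series ((fun k => alpha * (1 - alpha) ^+ k * (walkmx ^+ k) i j) : R^nat)).

Definition hS (S : {set 'I_n.+1}) : R := (boundary_size S)%:R / (vol S)%:R.
Definition hSalpha (alpha : R) (S : {set 'I_n.+1}) : R :=
  (#|S|%:R)^-1 * \sum_(i in S) \sum_(j in ~: S) ppr alpha i j.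
Definition davg (S : {set 'I_n.+1}) : R := (vol S)%:R / (#|S|)%:R.
End Graph.

From HB Require Import structures.
From mathcomp Require Import all_boot all_order all_algebra.
From mathcomp Require Import all_classical all_reals.
From mathcomp Require Import topology normedtype sequences.
From mathcomp Require Import ring.
Set Implicit Arguments. Unset Strict Implicit. Unset Printing Implicit Defensive.
Import Order.TTheory GRing.Theory Num.Theory numFieldNormedType.Exports.
Local Open Scope ring_scope.

(* Let [walk_mass T k i] be the probability that the [k]-step random walk
   started at [i] ends in [T].  Walking one more step from [S], the mass that
   stays in [S] is dominated by the degrees (by symmetry of the edges), and the
   mass entering [V \ S] crosses a boundary edge, so the degree-weighted escape
   mass [\sum_(i in S) d_i walk_mass (~: S) k i] grows by at most [|∂S|] per
   step.  Hence [\sum_(i in S) walk_mass (~: S) k i <= k |∂S| / d_min(S)], and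
   weighting by [alpha (1 - alpha)^k], with
   [\sum_k k alpha (1 - alpha)^k = (1 - alpha) / alpha], gives
   [|S| h_{S,alpha} <= (1 - alpha) / alpha * |∂S| / d_min(S)], which is the
   claim because [d_avg(S) h_S = |∂S| / |S|]. *)

Section RandomWalk.
Variables (R : realType) (n : nat) (e : rel 'I_n.+1).
Hypothesis no_iso : no_isolated e.

Lemma deg_sum i : (deg e i)%:R = \sum_l (e i l)%:R :> R.
Proof.
rewrite /deg -sum1_card natr_sum big_mkcond /=; apply: eq_bigr => l _.
by rewrite inE; case: (e i l).
Qed.

Lemma deg_neq0 i : (deg e i)%:R != 0 :> R.
Proof. by rewrite pnatr_eq0 -lt0n no_iso. Qed.

Lemma walkmxE i j : walkmx e R i j = (e i j)%:R / (deg e i)%:R.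
Proof.
have degmx_unit : degmx e R \in unitmx.
  rewrite unitmxE det_diag unitfE; apply/prodf_neq0 => k _.
  by rewrite mxE deg_neq0.
have : degmx e R *m walkmx e R = adj e R by rewrite /walkmx mulKVmx.
move=> /(congr1 (fun M : 'M_n.+1 => M i j)).
rewrite /degmx mul_diag_mx !mxE => <-.
by rewrite mulrC mulKf // deg_neq0.
Qed.

Lemma walkmx_ge0 i j : 0 <= walkmx e R i j.
Proof. by rewrite walkmxE divr_ge0 // ler0n. Qed.

Lemma walkmx_row_sum i : \sum_l walkmx e R i l = 1.
Proof.
under eq_bigr do rewrite walkmxE.
by rewrite -mulr_suml -deg_sum mulfV // deg_neq0.
Qed.

Definition walk_mass (T : {set 'I_n.+1}) k i : R :=
  \sum_(j in T) (walkmx e R ^+ k) i j.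

Lemma walk_mass0 T i : walk_mass T 0 i = (i \in T)%:R.
Proof.
rewrite /walk_mass expr0; under eq_bigr do rewrite mxE.
rewrite (big_mkcond (fun j => j \in T)) (bigD1 i) //= big1 ?addr0 => [|j ji].
  by rewrite eqxx; case: (i \in T).
by rewrite eq_sym (negbTE ji); case: (j \in T).
Qed.

Lemma walk_massS T k i :
  walk_mass T k.+1 i = \sum_l walkmx e R i l * walk_mass T k l.
Proof.
rewrite /walk_mass exprS -mulmxE; under eq_bigr do rewrite mxE.
by rewrite exchange_big /=; apply: eq_bigr => l _; rewrite mulr_sumr.
Qed.

Lemma walk_mass_bounds T k i : 0 <= walk_mass T k i <= 1.
Proof.
elim: k i => [|k IH] i.
  by rewrite walk_mass0; case: (i \in T); rewrite ?ler01 ?lexx.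
rewrite walk_massS; apply/andP; split.
  apply: sumr_ge0 => l _; apply: mulr_ge0; first exact: walkmx_ge0.
  by case/andP: (IH l).
rewrite -(walkmx_row_sum i); apply: ler_sum => l _.
rewrite -[leRHS]mulr1; apply: ler_wpM2l; first exact: walkmx_ge0.
by case/andP: (IH l).
Qed.

Lemma walkmxX_bounds k i j : 0 <= (walkmx e R ^+ k) i j <= 1.
Proof. by have := walk_mass_bounds [set j] k i; rewrite /walk_mass big_set1. Qed.

Hypothesis e_sym : symmetric e.
Variable S : {set 'I_n.+1}.

Lemma boundary_sizeE :
  (boundary_size e S)%:R = \sum_(i in S) \sum_(l | l \notin S) (e i l)%:R :> R.
Proof.
rewrite /boundary_size -sum1_card natr_sum pair_big_dep /=.
rewrite big_mkcond [RHS]big_mkcond /=; apply: eq_bigr => p _; rewrite inE.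
by case: (e p.1 p.2); case: (p.1 \in S); case: (p.2 \in S).
Qed.

Lemma sum_deg_walk_massS_le k :
  \sum_(i in S) (deg e i)%:R * walk_mass (~: S) k.+1 i <=
  \sum_(i in S) (deg e i)%:R * walk_mass (~: S) k i + (boundary_size e S)%:R.
Proof.
set m := walk_mass (~: S) k.
have mass_ge0 l : 0 <= m l by case/andP: (walk_mass_bounds (~: S) k l).
have -> : \sum_(i in S) (deg e i)%:R * walk_mass (~: S) k.+1 i =
    \sum_(i in S) \sum_(l in S) (e i l)%:R * m l +
    \sum_(i in S) \sum_(l | l \notin S) (e i l)%:R * m l.
  rewrite -big_split /=; apply: eq_bigr => i _.
  rewrite walk_massS mulr_sumr (bigID (mem S)) /=.
  by congr (_ + _); apply: eq_bigr => l _;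
    rewrite walkmxE mulrA mulrCA mulfV ?mulr1 // deg_neq0.
apply: lerD.
  rewrite exchange_big /=; apply: ler_sum => l _.
  rewrite -mulr_suml; apply: ler_wpM2r => //.
  rewrite deg_sum; under [leRHS]eq_bigr do rewrite e_sym.
  rewrite [leRHS](bigID (mem S)) /= lerDl.
  by apply: sumr_ge0 => *; rewrite ler0n.
rewrite boundary_sizeE; apply: ler_sum => i _; apply: ler_sum => l _.
rewrite -[leRHS]mulr1; apply: ler_wpM2l; first by rewrite ler0n.
by case/andP: (walk_mass_bounds (~: S) k l).
Qed.

Lemma sum_deg_walk_mass_le k :
  \sum_(i in S) (deg e i)%:R * walk_mass (~: S) k i <=
  k%:R * (boundary_size e S)%:R.
Proof.
elim: k => [|k IH].
  rewrite mul0r big1 // => i iS.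
  by rewrite walk_mass0 inE iS mulr0.
apply: le_trans (sum_deg_walk_massS_le k) _.
by rewrite -natr1 mulrDl mul1r lerD2r.
Qed.

Lemma dmin_le i : i \in S -> (dmin e S <= deg e i)%N.
Proof. by move=> iS; have := bigmin_le_cond n.+1 (deg e) iS; rewrite minEnat. Qed.

Lemma dmin_gt0 : (0 < dmin e S)%N.
Proof.
rewrite /dmin; apply: (big_ind (fun x => 0 < x)%N) => // x y.
by rewrite leq_min => -> ->.
Qed.

Lemma sum_walk_mass_le k :
  \sum_(i in S) walk_mass (~: S) k i <=
  k%:R * (boundary_size e S)%:R / (dmin e S)%:R.
Proof.
rewrite ler_pdivlMr ?ltr0n ?dmin_gt0 // mulrC mulr_sumr.
apply: le_trans (sum_deg_walk_mass_le k); apply: ler_sum => i iS.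
apply: ler_wpM2r; first by case/andP: (walk_mass_bounds (~: S) k i).
by rewrite ler_nat dmin_le.
Qed.

End RandomWalk.

Section GeometricSums.
Variable R : comPzRingType.

Lemma geometric_sum_mul (a : R) N :
  a * \sum_(0 <= k < N) (1 - a) ^+ k = 1 - (1 - a) ^+ N.
Proof.
elim: N => [|N IH]; first by rewrite big_geq // mulr0 expr0 subrr.
by rewrite big_nat_recr //= mulrDr IH exprSr; ring.
Qed.

Lemma arithmetico_geometric_sum_mul (a : R) N :
  a ^+ 2 * \sum_(0 <= k < N) k%:R * (1 - a) ^+ k =
  (1 - a) - (1 - a) ^+ N * (a * N%:R + (1 - a)).
Proof.
elim: N => [|N IH].
  by rewrite big_geq // mulr0 expr0 mul1r mulr0 add0r subrr.
by rewrite big_nat_recr //= mulrDr IH [(1 - a) ^+ N.+1]exprSr -natr1; ring.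
Qed.

End GeometricSums.

Section PersonalizedPageRank.
Local Open Scope classical_set_scope.
Variables (R : realType) (n : nat) (e : rel 'I_n.+1) (alpha : R).
Hypotheses (no_iso : no_isolated e) (e_sym : symmetric e).
Hypotheses (alpha_gt0 : 0 < alpha) (alpha_le1 : alpha <= 1).

Let q := 1 - alpha.
Let ppr_term i j k := alpha * q ^+ k * (walkmx e R ^+ k) i j.

Let q_ge0 : 0 <= q. Proof. by rewrite subr_ge0. Qed.

Let ppr_weight_ge0 k : 0 <= alpha * q ^+ k.
Proof. by rewrite mulr_ge0 ?exprn_ge0 // ltW. Qed.

Lemma is_cvg_ppr_series i j : cvgn (series (ppr_term i j)).
Proof.
have term_ge0 k : 0 <= ppr_term i j k.
  by rewrite mulr_ge0 //; case/andP: (walkmxX_bounds R no_iso k i j).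
apply: nondecreasing_is_cvgn.
  exact: (@nondecreasing_series _ _ predT 0%N (fun k _ _ => term_ge0 k)).
exists 1 => _ [N _ <-].
apply: (@le_trans _ _ (alpha * \sum_(0 <= k < N) q ^+ k)).
  rewrite /series /= mulr_sumr; apply: ler_sum => k _.
  rewrite /ppr_term -[leRHS]mulr1 ler_wpM2l //.
  by case/andP: (walkmxX_bounds R no_iso k i j).
by rewrite geometric_sum_mul gerBl exprn_ge0.
Qed.

Lemma sum_ppr_out_le (S : {set 'I_n.+1}) :
  \sum_(i in S) \sum_(j in ~: S) ppr e alpha i j <=
  q / alpha * ((boundary_size e S)%:R / (dmin e S)%:R).
Proof.
set B : R := (boundary_size e S)%:R; set dm : R := (dmin e S)%:R.
have dm_gt0 : 0 < dm by rewrite ltr0n dmin_gt0.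
have partial_cvg : (\sum_(i in S) \sum_(j in ~: S) series (ppr_term i j) N)
    @[N --> \oo] --> \sum_(i in S) \sum_(j in ~: S) ppr e alpha i j.
  apply: cvg_big => [|i _]; first exact: add_continuous.
  apply: cvg_big => [|j _]; first exact: add_continuous.
  exact: is_cvg_ppr_series.
rewrite -(cvg_lim _ partial_cvg); last exact: Rhausdorff.
apply: limr_le; first by apply/cvg_ex; eexists; exact: partial_cvg.
apply: nearW => N.
have -> : \sum_(i in S) \sum_(j in ~: S) series (ppr_term i j) N =
    \sum_(0 <= k < N) alpha * q ^+ k * \sum_(i in S) walk_mass R e (~: S) k i.
  rewrite /series /=; under eq_bigr do rewrite exchange_big /=.
  rewrite exchange_big /=; apply: eq_bigr => k _.
  by rewrite mulr_sumr; apply: eq_bigr => i _; rewrite mulr_sumr.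
apply: le_trans (_ : \sum_(0 <= k < N) alpha * q ^+ k * (k%:R * B / dm) <= _).
  by apply: ler_sum => k _; rewrite ler_wpM2l ?sum_walk_mass_le.
have -> : \sum_(0 <= k < N) alpha * q ^+ k * (k%:R * B / dm) =
    B / dm / alpha * (alpha ^+ 2 * \sum_(0 <= k < N) k%:R * q ^+ k).
  by rewrite !mulr_sumr; apply: eq_bigr => k _; field; rewrite !gt_eqF.
rewrite arithmetico_geometric_sum_mul -/q.
have -> : q / alpha * (B / dm) = B / dm / alpha * q by rewrite mulrC mulrA mulrAC.
rewrite ler_wpM2l ?divr_ge0 ?ler0n ?(ltW dm_gt0) ?(ltW alpha_gt0) // gerBl.
by rewrite mulr_ge0 ?exprn_ge0 // addr_ge0 // mulr_ge0 ?ler0n // ltW.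
Qed.

End PersonalizedPageRank.

Theorem theorem6 (R : realType) (n : nat) (e : rel 'I_n.+1)
  (Hsimple : simple_graph e) (Hconn : connected_graph e) (Hiso : no_isolated e)
  (alpha : R) (Ha0 : 0 < alpha) (Ha1 : alpha < 1)
  (S : {set 'I_n.+1}) (HS : (0 < #|S|)%N)
  (Hvol : ((vol e S)%:R : R) <= (vol e [set: 'I_n.+1])%:R / 2) :
  hSalpha e alpha S <=
    (1 - alpha) / alpha * (davg e R S / (dmin e S)%:R) * hS e R S.
Proof.
have [e_sym _] := Hsimple.
have [v vS] : exists v, v \in S by apply/card_gt0P.
have vol_gt0 : 0 < ((vol e S)%:R : R).
  by rewrite ltr0n /vol (bigD1 v) //= (leq_trans (Hiso v) (leq_addr _ _)).
have card_gt0 : 0 < (#|S|%:R : R) by rewrite ltr0n.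
have dmin_gt0 : 0 < ((dmin e S)%:R : R) by rewrite ltr0n dmin_gt0.
rewrite /hSalpha /hS /davg.
apply: le_trans (_ : _ <= #|S|%:R^-1 * ((1 - alpha) / alpha *
  ((boundary_size e S)%:R / (dmin e S)%:R))) _.
  by rewrite ler_wpM2l ?invr_ge0 ?(ltW card_gt0) ?sum_ppr_out_le ?ltW.
by rewrite le_eqVlt; apply/orP; left; apply/eqP; field; rewrite !gt_eqF.
Qed.
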